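(* Let $\mathcal{A}$ be a unital dual Banach algebra. If $\mathcal{A}$ is Johnson pseudo-Connes amenable, then $\mathcal{A}$ is approximately Connes amenable.
   Context: A dual Banach algebra is a Banach algebra $\mathcal{A}$ together with a closed $\mathcal{A}$-submodule $\mathcal{A}_*$ of $\mathcal{A}^*$ such that $\mathcal{A}=(\mathcal{A}_* )^*$. A Banach $\mathcal{A}$-bimodule $E$ is normal dual if $E=(E_* )^*$ for a closed submodule $E_*$ of $E^*$ and the module maps $a\mapsto a\cdot x$, $a\mapsto x\cdot a$ are weak$^*$-weak$^*$ continuous. $\mathcal{A}$ is approximately Connes amenable if for every normal dual Banach $\mathcal{A}$-bimodule $E$, every weak$^*$-continuous derivation $D:\mathcal{A}\to E$ is approximately inner, i.e. there is a net $(x_\alpha)$ in $E$ with $D(a)=\lim_\alpha(a\cdot x_\alpha-x_\alpha\cdot a)$ for all $a$. For a bimodule $E$, $\sigma wc(E)$ is the set of $x\in E$ for which $a\mapsto a\cdot x$, $a\mapsto x\cdot a$ are weak$^*$-weak continuous. $\mathcal{A}\hat{\otimes}\mathcal{A}$ has actions $a\cdot(b\otimes c)=ab\otimes c$, $(b\otimes c)\cdot a=b\otimes ca$; duals carry the dual actions. $\pi_{\mathcal{A}}$ is the multiplication map $\mathcal{A}\hat{\otimes}\mathcal{A}\to\mathcal{A}$, $i_{\mathcal{A}_*}:\mathcal{A}_*\hookrightarrow\mathcal{A}^*$ the canonical embedding. $\mathcal{A}$ is Johnson pseudo-Connes amenable if there is a (not necessarily bounded) net $(m_\alpha)$ in $(\mathcal{A}\hat{\otimes}\mathcal{A})^{**}$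 with $\langle T,a\cdot m_\alpha\rangle=\langle T,m_\alpha\cdot a\rangle$ for all $a\in\mathcal{A}$, $T\in\sigma wc((\mathcal{A}\hat{\otimes}\mathcal{A})^* )$, $\alpha$, and $i_{\mathcal{A}_*}^*\pi_{\mathcal{A}}^{**}(m_\alpha)a\to a$ for every $a\in\mathcal{A}$. *)

(* Scalars: the complex numbers  C = R[i]  for an
   arbitrary model  R : realType  of the reals (real_closed's [complex]). *)
From HB Require Import structures.
From mathcomp Require Import all_boot all_order all_algebra.
From mathcomp Require Import all_classical all_reals.
From mathcomp Require Import topology normedtype.
From mathcomp Require Import complex.
Set Implicit Arguments. Unset Strict Implicit. Unset Printing Implicit Defensive.
Import Order.TTheory GRing.Theory Num.Theory.
Import numFieldNormedType.Exports.
Local Open Scope ring_scope.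
Local Open Scope classical_set_scope.

Section DualBanach.
Variable K : numFieldType.

Definition directed (I : Type) (le : I -> I -> Prop) : Prop :=
  inhabited I /\ (forall i, le i i) /\
  (forall i j k, le i j -> le j k -> le i k) /\
  (forall i j, exists k, le i k /\ le j k).

Definition netlim (I : Type) (le : I -> I -> Prop) (V : normedModType K)
  (u : I -> V) (l : V) : Prop :=
  forall e : K, 0 < e -> exists i0, forall i, le i0 i -> `|u i - l| < e.

Definition netlimK (I : Type) (le : I -> I -> Prop) (u : I -> K) (l : K) : Prop :=
  forall e : K, 0 < e -> exists i0, forall i, le i0 i -> `|u i - l| < e.

(* continuity of h : X -> Y when X carries the weak topology sigma(X,P) and
   Y the weak topology sigma(Y,Q), stated with nets *)
Definition wcont (X Y : Type) (P : set (X -> K)) (Q : set (Y -> K))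
  (h : X -> Y) : Prop :=
  forall (I : Type) (le : I -> I -> Prop) (u : I -> X) (x : X),
    directed le ->
    (forall p, P p -> netlimK le (fun i => p (u i)) (p x)) ->
    forall q, Q q -> netlimK le (fun i => q (h (u i))) (q (h x)).

Definition lin_fun (X : normedModType K) (f : X -> K) : Prop :=
  (forall x y, f (x + y) = f x + f y) /\ (forall (k : K) x, f (k *: x) = k * f x).

Definition fbnd (X : normedModType K) (f : X -> K) (M : K) : Prop :=
  forall x, `|f x| <= M * `|x|.

Definition in_dual (X : normedModType K) (f : X -> K) : Prop :=
  lin_fun f /\ exists M, fbnd f M.

Definition closed_dual_subspace (X : normedModType K) (P : set (X -> K)) : Prop :=
  (forall f, P f -> in_dual f) /\
  P (fun _ => 0) /\
  (forall f g, P f -> P g -> P (fun x => f x + g x)) /\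
  (forall (k : K) f, P f -> P (fun x => k * f x)) /\
  (forall f, lin_fun f ->
     (forall e : K, 0 < e -> exists g, P g /\ fbnd (fun x => f x - g x) e) ->
     P f).

(* psi is a bounded linear functional on the normed space P (subspace of X^*
   with the operator norm), i.e. psi is an element of P^* *)
Definition in_dual_of (X : Type) (P : set (X -> K)) (bnd : (X -> K) -> K -> Prop)
  (psi : (X -> K) -> K) : Prop :=
  (forall f g, P f -> P g -> psi (fun x => f x + g x) = psi f + psi g) /\
  (forall (k : K) f, P f -> psi (fun x => k * f x) = k * psi f) /\
  exists C, forall f M, P f -> 0 <= M -> bnd f M -> `|psi f| <= C * M.

(* X = (P)^* : P is a closed subspace of X^* and the canonical map
   x |-> (f |-> f x) is an isometric isomorphism of X onto P^* *)
Definition predual_of (X : normedModType K) (P : set (X -> K)) : Prop :=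
  closed_dual_subspace P /\
  (forall psi, in_dual_of P (@fbnd X) psi ->
     exists x : X, forall f, P f -> psi f = f x) /\
  (forall x y : X, (forall f, P f -> f x = f y) -> x = y) /\
  (forall (x : X) (e : K), 0 < e ->
     exists f, P f /\ fbnd f 1 /\ `|x| - e <= `|f x|).

Definition banach_algebra (A : completeNormedModType K) (mul : A -> A -> A) : Prop :=
  (forall a b c, mul (a + b) c = mul a c + mul b c) /\
  (forall a b c, mul a (b + c) = mul a b + mul a c) /\
  (forall (k : K) a b, mul (k *: a) b = k *: mul a b) /\
  (forall (k : K) a b, mul a (k *: b) = k *: mul a b) /\
  (forall a b c, mul (mul a b) c = mul a (mul b c)) /\
  (forall a b, `|mul a b| <= `|a| * `|b|).

Definition unital (A : completeNormedModType K) (mul : A -> A -> A) : Prop :=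
  exists e : A, forall a, mul e a = a /\ mul a e = a.

(* (A, A_* = P) is a dual Banach algebra: P closed A-submodule of A^* for the
   dual actions (a.f)(x) = f(x a), (f.a)(x) = f(a x), and A = (P)^* *)
Definition dual_banach_algebra (A : completeNormedModType K) (mul : A -> A -> A)
  (P : set (A -> K)) : Prop :=
  banach_algebra mul /\ predual_of P /\
  (forall f a, P f -> P (fun x => f (mul x a)) /\ P (fun x => f (mul a x))).

Definition banach_bimodule (A : completeNormedModType K) (mul : A -> A -> A)
  (E : completeNormedModType K) (lact : A -> E -> E) (ract : E -> A -> E) : Prop :=
  (forall a b x, lact (a + b) x = lact a x + lact b x) /\
  (forall a x y, lact a (x + y) = lact a x + lact a y) /\
  (forall (k : K) a x, lact (k *: a) x = k *: lact a x) /\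
  (forall (k : K) a x, lact a (k *: x) = k *: lact a x) /\
  (forall a b x, ract x (a + b) = ract x a + ract x b) /\
  (forall a x y, ract (x + y) a = ract x a + ract y a) /\
  (forall (k : K) a x, ract x (k *: a) = k *: ract x a) /\
  (forall (k : K) a x, ract (k *: x) a = k *: ract x a) /\
  (forall a b x, lact (mul a b) x = lact a (lact b x)) /\
  (forall a b x, ract x (mul a b) = ract (ract x a) b) /\
  (forall a b x, ract (lact a x) b = lact a (ract x b)) /\
  (forall a x, `|lact a x| <= `|a| * `|x|) /\
  (forall a x, `|ract x a| <= `|a| * `|x|).

Definition normal_dual_module (A : completeNormedModType K) (P : set (A -> K))
  (E : completeNormedModType K) (lact : A -> E -> E) (ract : E -> A -> E)
  (Q : set (E -> K)) : Prop :=
  predual_of Q /\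
  (forall g a, Q g -> Q (fun x => g (ract x a)) /\ Q (fun x => g (lact a x))) /\
  (forall x, wcont P Q (fun a => lact a x) /\ wcont P Q (fun a => ract x a)).

Definition derivation (A : completeNormedModType K) (mul : A -> A -> A)
  (E : completeNormedModType K) (lact : A -> E -> E) (ract : E -> A -> E)
  (D : A -> E) : Prop :=
  (forall a b, D (a + b) = D a + D b) /\
  (forall (k : K) a, D (k *: a) = k *: D a) /\
  (forall a b, D (mul a b) = lact a (D b) + ract (D a) b).

Definition approx_inner (A : completeNormedModType K)
  (E : completeNormedModType K) (lact : A -> E -> E) (ract : E -> A -> E)
  (D : A -> E) : Prop :=
  exists (I : Type) (le : I -> I -> Prop) (x : I -> E),
    directed le /\
    forall a, netlim le (fun i => lact a (x i) - ract (x i) a) (D a).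

Definition approx_connes_amenable (A : completeNormedModType K)
  (mul : A -> A -> A) (P : set (A -> K)) : Prop :=
  forall (E : completeNormedModType K) (lact : A -> E -> E) (ract : E -> A -> E)
         (Q : set (E -> K)),
    banach_bimodule mul lact ract -> normal_dual_module P lact ract Q ->
    forall D : A -> E, derivation mul lact ract D -> wcont P Q D ->
      approx_inner lact ract D.

(* (A \hat\otimes A)^* is identified (isometrically, via the universal property
   of the projective tensor product) with the bounded bilinear forms on A x A,
   T(b, c) = <T, b (x) c>. *)
Definition bilbnd (A : completeNormedModType K) (T : A -> A -> K) (M : K) : Prop :=
  forall b c, `|T b c| <= M * `|b| * `|c|.

Definition bbil (A : completeNormedModType K) (T : A -> A -> K) : Prop :=
  (forall b b' c, T (b + b') c = T b c + T b' c) /\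
  (forall b c c', T b (c + c') = T b c + T b c') /\
  (forall (k : K) b c, T (k *: b) c = k * T b c) /\
  (forall (k : K) b c, T b (k *: c) = k * T b c) /\
  exists M, bilbnd T M.

(* elements of (A \hat\otimes A)^** : bounded linear functionals on the
   Banach space of bounded bilinear forms *)
Definition bidual (A : completeNormedModType K) (m : (A -> A -> K) -> K) : Prop :=
  (forall T1 T2, bbil T1 -> bbil T2 ->
     m (fun b c => T1 b c + T2 b c) = m T1 + m T2) /\
  (forall (k : K) T, bbil T -> m (fun b c => k * T b c) = k * m T) /\
  exists C, forall T M, bbil T -> 0 <= M -> bilbnd T M -> `|m T| <= C * M.

(* dual module actions on (A \hat\otimes A)^*, from
   a.(b (x) c) = ab (x) c  and  (b (x) c).a = b (x) ca :
   (a.T)(b,c) = T(b, c a)   and   (T.a)(b,c) = T(a b, c) *)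
Definition lactT (A : completeNormedModType K) (mul : A -> A -> A)
  (a : A) (T : A -> A -> K) : A -> A -> K := fun b c => T b (mul c a).
Definition ractT (A : completeNormedModType K) (mul : A -> A -> A)
  (T : A -> A -> K) (a : A) : A -> A -> K := fun b c => T (mul a b) c.

(* sigma wc of the dual of A \hat\otimes A: a |-> a.T and a |-> T.a are weak*-weak
   continuous, the weak topology of the dual Y of A \hat\otimes A being
   sigma(Y, Y^* ), Y^* = bidual *)
Definition sigma_wc (A : completeNormedModType K) (mul : A -> A -> A)
  (P : set (A -> K)) (T : A -> A -> K) : Prop :=
  bbil T /\
  wcont P (@bidual A) (fun a => lactT mul a T) /\
  wcont P (@bidual A) (fun a => ractT mul T a).

(* For m in (A\hat\otimes A)^**,
   <T, a.m> = <T.a, m> and <T, m.a> = <a.T, m>;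
   pi_A^*(f)(b,c) = f(bc), so i_{A_*}^* pi_A^**(m) is the element y of
   A = (A_* )^* with f(y) = m(pi_A^* f) for all f in A_* . *)
Definition johnson_pseudo_connes_amenable (A : completeNormedModType K)
  (mul : A -> A -> A) (P : set (A -> K)) : Prop :=
  exists (I : Type) (le : I -> I -> Prop) (m : I -> ((A -> A -> K) -> K)),
    directed le /\
    (forall i, bidual (m i)) /\
    (forall i a T, sigma_wc mul P T ->
        m i (ractT mul T a) = m i (lactT mul a T)) /\
    exists y : I -> A,
      (forall i f, P f -> f (y i) = m i (fun b c => f (mul b c))) /\
      (forall a, netlim le (fun i => mul (y i) a) a).

End DualBanach.

(* Let [(m_i)] be the net given by Johnson pseudo-Connes amenability and
   [y_i = i_{A_*}^* pi_A^** (m_i)], so that [y_i a -> a]; with a unit [e] this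
   means [y_i -> e].  Let [D : A -> E] be a weak*-continuous derivation into a
   normal dual module [E = (E_* )^*].  For [g] in [E_*] the bilinear form
   [T_g(b, c) = <g, b.D c>] is bounded, because [D] is bounded by the uniform
   boundedness principle, and it lies in [sigma wc] because [D] and the module
   actions are weak*-continuous.  Hence [<g, x_i> := <T_g, m_i>] defines
   [x_i] in [E], and the Leibniz rule [D (c a) = c.D a + D c.a] together with
   [<T.a, m_i> = <a.T, m_i>] gives [a.x_i - x_i.a = y_i.D a].  Since
   [y_i.D a -> e.D a = D a - D e.a], the net [x_i + e.D e - D e] implements [D]
   approximately. *)

From HB Require Import structures.
From mathcomp Require Import all_boot all_order all_algebra.
From mathcomp Require Import all_classical all_reals.
From mathcomp Require Import topology normedtype.
From mathcomp Require Import complex.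
From mathcomp Require Import ring zify.
Set Implicit Arguments. Unset Strict Implicit. Unset Printing Implicit Defensive.
Import Order.TTheory GRing.Theory Num.Theory.
Import numFieldNormedType.Exports.
Local Open Scope ring_scope.
Local Open Scope classical_set_scope.

Section WeakDual.
Variables (K : numFieldType) (X : normedModType K).

Lemma lin_fun0 (f : X -> K) : lin_fun f -> f 0 = 0.
Proof. by case=> _ fZ; rewrite -(scale0r (0 : X)) fZ mul0r. Qed.

Lemma lin_funB (f : X -> K) x y : lin_fun f -> f (x - y) = f x - f y.
Proof. by case=> fD fZ; rewrite fD -scaleN1r fZ mulN1r. Qed.

Lemma in_dual_bnd (f : X -> K) : in_dual f -> exists M, 0 <= M /\ fbnd f M.
Proof.
case=> _ [M fM]; exists `|M|; split=> // x.
have M0 : 0 <= M * `|x| := le_trans (normr_ge0 _) (fM x).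
by apply: le_trans (fM x) _; rewrite -(ger0_norm M0) normrM normr_id.
Qed.

Variable P : set (X -> K).
Hypothesis P_lin : forall f, P f -> lin_fun f.
Hypothesis P0 : P (fun _ => 0).
Hypothesis PD : forall f g, P f -> P g -> P (fun x => f x + g x).
Hypothesis PZ : forall (k : K) f, P f -> P (fun x => k * f x).

(* Induction on [s = p :: s']: either some [x1] in the common kernel of [s']
   has [p x1 = 1], and [f - f x1 * p] falls under the induction hypothesis,
   or [p] vanishes on that kernel and can be dropped. *)
Lemma mem_of_common_kernel (s : seq (X -> K)) (f : X -> K) :
  (forall p, List.In p s -> P p) -> lin_fun f ->
  (forall x, (forall p, List.In p s -> p x = 0) -> f x = 0) -> P f.
Proof.
elim: s f => [|p s IH] f Ps lf fker.
  by have -> : f = (fun _ => 0) by apply: boolp.funext => x; apply: fker.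
have Pp : P p by apply: Ps; left.
have lp := P_lin Pp.
have Ps' q : List.In q s -> P q by move=> ?; apply: Ps; right.
have [[x0 [sx0 px0]]|noindep] :=
  boolp.pselect (exists x0, (forall q, List.In q s -> q x0 = 0) /\ p x0 != 0).
  pose x1 := (p x0)^-1 *: x0.
  have px1 : p x1 = 1 by rewrite (proj2 lp) mulVf.
  have sx1 q : List.In q s -> q x1 = 0.
    by move=> qs; rewrite /x1 (proj2 (P_lin (Ps' _ qs))) (sx0 _ qs) mulr0.
  pose f' x := f x - f x1 * p x.
  have lf' : lin_fun f'.
    split=> [x y|k x]; rewrite /f' ?(proj1 lf) ?(proj2 lf) ?(proj1 lp) ?(proj2 lp); ring.
  have Pf' : P f'.
    apply: IH => // x sx; have : f (x - p x *: x1) = 0.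
      apply: fker => q /= [<-|qs].
        by rewrite (lin_funB _ _ lp) (proj2 lp) px1 mulr1 subrr.
      have lq := P_lin (Ps' _ qs).
      by rewrite (lin_funB _ _ lq) (proj2 lq) (sx _ qs) (sx1 _ qs) mulr0 subrr.
    move/eqP; rewrite (lin_funB _ _ lf) (proj2 lf) subr_eq0 => /eqP fx.
    by rewrite /f' fx mulrC subrr.
  have -> : f = (fun x => f' x + f x1 * p x) by apply: boolp.funext => x; rewrite subrK.
  exact: PD (PZ _ Pp).
apply: IH => // x sx; apply: fker => q /= [<-|]; last exact: sx.
apply: contrapT => /eqP px; apply: noindep; exists x; split=> //; exact/eqP.
Qed.

(* Finite subfamilies of [P], directed by inclusion, index a net converging
   weakly to [0] on which [f] would be constantly [1]. *)
Lemma mem_of_wcont (f : X -> K) : lin_fun f -> wcont P [set f] id -> P f.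
Proof.
move=> lf fcont; apply: contrapT => nPf.
have sep s : (forall p, List.In p s -> P p) ->
    exists x, (forall p, List.In p s -> p x = 0) /\ f x = 1.
  move=> Ps; apply: contrapT => nosep; apply: nPf.
  apply: (mem_of_common_kernel Ps lf) => x sx; apply: contrapT => /eqP fx.
  apply: nosep; exists ((f x)^-1 *: x); split; last by rewrite (proj2 lf) mulVf.
  by move=> p ps; rewrite (proj2 (P_lin (Ps _ ps))) (sx _ ps) mulr0.
pose I := {s : seq (X -> K) | forall p, List.In p s -> P p}.
have [u uP] := boolp.choice (fun i : I => sep _ (proj2_sig i)).
pose le (i j : I) := forall p, List.In p (sval i) -> List.In p (sval j).
have dir : directed le.
  split; first by constructor; exists [::].
  split; first by move=> i p.
  split; first by move=> i j k ij jk p /ij /jk.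
  move=> [s Ps] [t Pt].
  have Pst p : List.In p (s ++ t) -> P p by case/List.in_app_iff; [apply: Ps|apply: Pt].
  by exists (exist _ (s ++ t) Pst); split=> p ?; apply/List.in_app_iff; [left|right].
have /(_ 1 ltr01) [i0 i0P] : netlimK le (fun i => f (u i)) (f 0).
  apply: (fcont _ le u 0 dir) => [p Pp e e0|//].
  have Pp' q : List.In q [:: p] -> P q by move=> /= [<-|[]].
  exists (exist _ [:: p] Pp') => i i0i.
  by rewrite (proj1 (uP i)) ?(lin_fun0 (P_lin Pp)) ?subrr ?normr0 //; apply: i0i; left.
by have := i0P i0 (fun _ h => h); rewrite (proj2 (uP i0)) (lin_fun0 lf) subr0 normr1 ltxx.
Qed.

End WeakDual.

Lemma wcont_comp_mem (K : numFieldType) (X : normedModType K) (Y : Type)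
    (P : set (X -> K)) (Q : set (Y -> K)) (h : X -> Y) (g : Y -> K) :
  closed_dual_subspace P -> wcont P Q h -> Q g -> lin_fun (g \o h) -> P (g \o h).
Proof.
move=> [Pdual [P0 [PD [PZ _]]]] hcont Qg lgh.
apply: mem_of_wcont => // [f /Pdual []//|I le u x dir ux _ ->].
exact: hcont.
Qed.

Lemma netlimK_add (K : numFieldType) (I : Type) (le : I -> I -> Prop)
    (u v : I -> K) l1 l2 :
  directed le -> netlimK le u l1 -> netlimK le v l2 ->
  netlimK le (fun i => u i + v i) (l1 + l2).
Proof.
move=> [_ [_ [le_tr le_ub]]] ul vl e e0.
have [i1 i1P] := ul _ (divr_gt0 e0 (ltr0n _ 2)).
have [i2 i2P] := vl _ (divr_gt0 e0 (ltr0n _ 2)).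
have [k [i1k i2k]] := le_ub i1 i2.
exists k => i ki; rewrite opprD addrACA (splitr e).
apply: le_lt_trans (ler_normD _ _) _.
by apply: ltrD; [apply: i1P; apply: le_tr ki|apply: i2P; apply: le_tr ki].
Qed.

Section Shrink.
Variables (K : numFieldType) (B r : K).

(* The next radius of the gliding hump: [4 * shrink B r <= r] makes the centres
   converge, and [4 * (B * shrink B r) <= 1] keeps the functional of bound [B]
   nearly unchanged along all later moves. *)
Definition shrink : K := r / (4 * (1 + B * r)).

Hypotheses (B0 : 0 <= B) (r0 : 0 < r).

Let Br0 : 0 <= B * r. Proof. exact: mulr_ge0 B0 (ltW r0). Qed.
Let den0 : 0 < 1 + B * r. Proof. by apply: lt_le_trans ltr01 _; rewrite lerDl. Qed.

Lemma shrink_gt0 : 0 < shrink.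
Proof. by rewrite divr_gt0 ?mulr_gt0 ?den0. Qed.

Lemma shrink_le : 4 * shrink <= r.
Proof.
have -> : 4 * shrink = r / (1 + B * r).
  by rewrite /shrink; field; rewrite (gt_eqF den0) ?pnatr_eq0.
by rewrite (ler_pdivrMr _ _ den0) ler_peMr ?lerDl // ltW.
Qed.

Lemma bnd_shrink : 4 * (B * shrink) <= 1.
Proof.
have -> : 4 * (B * shrink) = B * r / (1 + B * r).
  by rewrite /shrink; field; rewrite (gt_eqF den0) ?pnatr_eq0.
by rewrite (ler_pdivrMr _ _ den0) mul1r lerDr.
Qed.

End Shrink.

(* If [F] is pointwise but not uniformly bounded, [hump n x r] picks some [phi]
   in [F] and a point within [r] of [x] where [|phi| > 2(n+1)].  Iterating with
   the radii given by [shrink] yields a Cauchy sequence at whose limit every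
   [phi_n] still exceeds [n + 1], against pointwise boundedness. *)
Section GlidingHump.
Variables (K : numFieldType) (A : completeNormedModType K) (F : set (A -> K)).
Hypothesis K_archi : Num.archimedean_axiom K.
Hypothesis F_lin : forall f, F f -> lin_fun f.
Hypothesis F_ptws_bounded : forall z, exists M, forall f, F f -> `|f z| <= M.
Variable bnd : (A -> K) -> K.
Hypothesis bndP : forall f, F f -> 0 <= bnd f /\ fbnd f (bnd f).
Variable hump : nat -> A -> K -> (A -> K) * A.
Hypothesis humpP : forall n x r, 0 < r ->
  [/\ F (hump n x r).1, `|(hump n x r).2 - x| <= r
    & 2 * n.+1%:R < `|(hump n x r).1 (hump n x r).2|].

Fixpoint hump_seq (n : nat) : A * K :=
  if n is n'.+1 then
    let h := hump n' (hump_seq n').1 (hump_seq n').2 in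
    (h.2, shrink (bnd h.1) (hump_seq n').2)
  else (0, 1).

Let x n := (hump_seq n).1.
Let r n := (hump_seq n).2.
Let phi n := (hump n (x n) (r n)).1.

Lemma hump_seq_spec n : [/\ 0 < r n, F (phi n), `|x n.+1 - x n| <= r n
  & 2 * n.+1%:R < `|phi n (x n.+1)|].
Proof.
elim: n => [|n [rn _ _ _]]; first by have [] := humpP 0 0 ltr01.
have [Fphi _ _] := humpP n (x n) rn.
have rn1 : 0 < r n.+1 by apply: shrink_gt0 => //; case: (bndP Fphi).
by have [] := humpP n.+1 (x n.+1) rn1.
Qed.

Lemma radius_gt0 n : 0 < r n. Proof. by case: (hump_seq_spec n). Qed.

Lemma radius_shrink n : 4 * r n.+1 <= r n.
Proof.
have [rn Fphi _ _] := hump_seq_spec n.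
by apply: shrink_le => //; case: (bndP Fphi).
Qed.

Lemma bnd_radius n : 4 * (bnd (phi n) * r n.+1) <= 1.
Proof.
have [rn Fphi _ _] := hump_seq_spec n.
by apply: bnd_shrink => //; case: (bndP Fphi).
Qed.

Lemma radius_small n : r n * n.+1%:R <= 1.
Proof.
elim: n => [|n IH]; first by rewrite mulr1 /r.
apply: le_trans IH; apply: (@le_trans _ _ (r n.+1 * (4 * n.+1%:R))).
  apply: ler_wpM2l; first exact/ltW/radius_gt0.
  by rewrite -natrM ler_nat; lia.
by rewrite mulrA ler_wpM2r // [_ * 4]mulrC radius_shrink.
Qed.

Lemma hump_seq_dist n m : (n <= m)%N -> `|x m - x n| <= 2 * (r n - r m).
Proof.
move=> /subnK <-; elim: (m - n)%N => [|k IH]; first by rewrite subrr normr0 subrr mulr0.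
rewrite addSn; set j := (k + n)%N.
have [_ _ step _] := hump_seq_spec j.
have rj : r j <= 2 * (r j - r j.+1).
  rewrite -subr_ge0 (_ : _ - _ = r j - 2 * r j.+1); last by ring.
  rewrite subr_ge0; apply: le_trans (radius_shrink j).
  by apply: ler_wpM2r; [exact/ltW/radius_gt0|rewrite ler_nat].
have -> : x j.+1 - x n = (x j.+1 - x j) + (x j - x n) by rewrite addrA subrK.
apply: le_trans (ler_normD _ _) _; apply: le_trans (lerD (le_trans step rj) IH) _.
by rewrite -mulrDr addrC addrA subrK.
Qed.

Lemma radius_anti n m : (n <= m)%N -> r m <= r n.
Proof.
move=> /hump_seq_dist nm; have := le_trans (normr_ge0 _) nm.
by rewrite pmulr_rge0 // subr_ge0.
Qed.

Lemma hump_seq_cvg : cvg (x @ \oo).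
Proof.
apply/cauchy_cvgP/cauchy_ballP => e e0; near_simpl.
have [N NP] : exists N, 2 * r N < e.
  have [N] := K_archi (2 / e); rewrite ger0_norm ?divr_ge0 ?ltW // => Ne.
  have {}Ne : 2 < N.+1%:R * e.
    by rewrite -ltr_pdivrMr //; apply: lt_le_trans Ne _; rewrite ler_nat.
  exists N; rewrite -(ltr_pM2r (ltr0n K N.+1)) -mulrA [e * _]mulrC.
  by apply: le_lt_trans Ne; rewrite ler_piMr ?radius_small.
exists ([set n | N <= n], [set n | N <= n])%N; first by split; exists N.
have near p q : (N <= p)%N -> (p <= q)%N -> `|x q - x p| < e.
  move=> Np pq; apply: le_lt_trans (hump_seq_dist pq) _; apply: le_lt_trans NP.
  apply: ler_wpM2l => //; apply: le_trans (radius_anti Np).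
  by rewrite lerBlDr lerDl; exact/ltW/radius_gt0.
move=> [p q] [/= Np Nq]; rewrite -ball_normE /=.
by case/orP: (leq_total p q) => pq; [rewrite distrC; apply: near|apply: near].
Qed.

Lemma gliding_hump_contra : False.
Proof.
pose xl := lim (x @ \oo).
have xl_lim : x @ \oo --> xl := hump_seq_cvg.
have [M FM] := F_ptws_bounded xl.
have [n] := K_archi M.
have [_ Fphi _ big] := hump_seq_spec n.
have [B0 Bphi] := bndP Fphi.
have M0 : 0 <= M := le_trans (normr_ge0 _) (FM _ Fphi).
rewrite ger0_norm // => Mn.
have close : `|xl - x n.+1| <= 3 * r n.+1.
  have [N _ NP] := (cvgrPdist_lt _ _).1 xl_lim _ (radius_gt0 n.+1).
  pose m := maxn N n.+1.
  have -> : xl - x n.+1 = (xl - x m) + (x m - x n.+1) by rewrite addrA subrK.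
  apply: le_trans (ler_normD _ _) _; rewrite (_ : 3 = 1 + 2) // mulrDl mul1r.
  apply: lerD; first by apply/ltW/NP; rewrite /= leq_maxl.
  apply: le_trans (hump_seq_dist (leq_maxr N n.+1)) _.
  by apply: ler_wpM2l => //; rewrite lerBlDr lerDl; exact/ltW/radius_gt0.
have perturb : `|phi n (xl - x n.+1)| <= 1.
  apply: le_trans (Bphi _) _; apply: le_trans (bnd_radius n).
  rewrite mulrCA; apply: ler_wpM2l => //; apply: le_trans close _.
  by apply: ler_wpM2r; [exact/ltW/radius_gt0|rewrite ler_nat].
have : `|phi n (x n.+1)| <= `|phi n xl| + 1.
  have -> : x n.+1 = xl - (xl - x n.+1) by rewrite opprB addrC subrK.
  rewrite (lin_funB _ _ (F_lin Fphi)); apply: le_trans (ler_normB _ _) _.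
  by rewrite lerD2l.
move=> /(lt_le_trans big); apply/negP.
rewrite -real_leNgt ?realD ?real1 ?ger0_real ?mulr_ge0 ?ler0n //.
apply: le_trans (_ : n.+1%:R <= _); last by rewrite ler_peMl ?ler0n // ler1n.
by rewrite -natr1 lerD2r; apply: le_trans (FM _ Fphi) (ltW Mn).
Qed.

End GlidingHump.

Lemma exists_hump (K : numFieldType) (A : normedModType K) (F : set (A -> K)) :
  (forall f, F f -> lin_fun f) ->
  (forall M, 0 <= M -> exists f z, F f /\ M * `|z| < `|f z|) ->
  forall (c : K) x0 r, 0 <= c -> 0 < r ->
  exists f x, [/\ F f, `|x - x0| <= r & c < `|f x|].
Proof.
move=> F_lin big c x0 r c0 r0.
have [f [z [Ff fz]]] := big (c / r) (divr_ge0 c0 (ltW r0)).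
have lf := F_lin _ Ff.
have z0 : 0 < `|z|.
  rewrite lt_def normr_ge0 andbT normr_eq0; apply: contraTneq fz => ->.
  by rewrite normr0 mulr0 (lin_fun0 lf) normr0 ltxx.
pose w := (r / `|z|) *: z.
have nw : `|w| = r by rewrite normrZ ger0_norm ?divr_ge0 ?ltW // divfK // gt_eqF.
have fw : c < `|f w|.
  rewrite (proj2 lf) normrM ger0_norm ?divr_ge0 ?ltW // -ltr_pdivrMl ?divr_gt0 //.
  by rewrite invf_div mulrC mulrA mulrAC.
have [fxw|] := boolp.pselect (c < `|f (x0 + w)|).
  by exists f, (x0 + w); split=> //; rewrite addrC addKr nw.
move=> /negP; rewrite -real_leNgt ?ger0_real // => fxw.
exists f, (x0 - w); split=> //; first by rewrite addrC addKr normrN nw.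
have diff : f w *+ 2 = f (x0 + w) - f (x0 - w).
  by rewrite (proj1 lf) (lin_funB _ _ lf) mulr2n; ring.
rewrite -(ltrD2l c) -mulr2n; apply: lt_le_trans (_ : `|f w| *+ 2 <= _).
  by rewrite ltrMn2r fw.
apply: le_trans (lerD fxw (lexx _)); rewrite -normrMn diff; exact: ler_normB.
Qed.

(* [Banach_Steinhauss] of [sequences] needs real scalars; this version holds
   over any archimedean [numFieldType], such as [R[i]]. *)
Theorem uniform_boundedness (K : numFieldType) (A : completeNormedModType K)
    (F : set (A -> K)) :
  Num.archimedean_axiom K -> (forall f, F f -> in_dual f) ->
  (forall z, exists M, forall f, F f -> `|f z| <= M) ->
  exists M, forall f z, F f -> `|f z| <= M * `|z|.
Proof.
move=> K_archi F_dual F_ptws; apply: contrapT => unbounded.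
have F_lin f : F f -> lin_fun f by case/F_dual.
have big M : 0 <= M -> exists f z, F f /\ M * `|z| < `|f z|.
  move=> M0; apply: contrapT => small; apply: unbounded; exists M => f z Ff.
  rewrite real_leNgt ?realM ?ger0_real //; apply/negP => fz.
  by apply: small; exists f, z.
have bnd_ex f : exists B : K, F f -> 0 <= B /\ fbnd f B.
  have [/F_dual/in_dual_bnd [B BP]|nFf] := boolp.pselect (F f); first by exists B.
  by exists 0; move/nFf.
have [bnd bndP] := boolp.choice bnd_ex.
have hump_ex (t : nat * A * K) : exists h : (A -> K) * A, 0 < t.2 ->
    [/\ F h.1, `|h.2 - t.1.2| <= t.2 & 2 * (t.1.1).+1%:R < `|h.1 h.2|].
  case: t => [[n x0] r] /=; have [r0|] := boolp.pselect (0 < r); last first.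
    by exists (fun _ => 0, x0).
  have c0 : 0 <= 2 * n.+1%:R :> K by rewrite mulr_ge0 ?ler0n.
  by have [f [x ?]] := exists_hump F_lin big x0 c0 r0; exists (f, x).
have [hump humpP] := boolp.choice hump_ex.
exact: (@gliding_hump_contra K A F K_archi F_lin F_ptws bnd bndP
  (fun n x r => hump (n, x, r)) (fun n x r => humpP (n, x, r))).
Qed.

Section Bimodule.
Variables (K : numFieldType) (A E : completeNormedModType K) (mul : A -> A -> A).
Variables (lact : A -> E -> E) (ract : E -> A -> E).
Hypothesis bimod : banach_bimodule mul lact ract.

Let lactDl a b x : lact (a + b) x = lact a x + lact b x.
Proof. by case: bimod. Qed.
Let lactDr a x y : lact a (x + y) = lact a x + lact a y.
Proof. by case: bimod => _ [+ _]. Qed.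
Let lactZl (k : K) a x : lact (k *: a) x = k *: lact a x.
Proof. by case: bimod => _ [_ [+ _]]. Qed.
Let lactZr (k : K) a x : lact a (k *: x) = k *: lact a x.
Proof. by case: bimod => _ [_ [_ [+ _]]]. Qed.
Let ractDl a x y : ract (x + y) a = ract x a + ract y a.
Proof. by case: bimod => _ [_ [_ [_ [_ [+ _]]]]]. Qed.
Let ractZl (k : K) a x : ract (k *: x) a = k *: ract x a.
Proof. by case: bimod => _ [_ [_ [_ [_ [_ [_ [+ _]]]]]]]. Qed.
Let lactM a b x : lact (mul a b) x = lact a (lact b x).
Proof. by case: bimod => _ [_ [_ [_ [_ [_ [_ [_ [+ _]]]]]]]]. Qed.
Let ractM a b x : ract x (mul a b) = ract (ract x a) b.
Proof. by case: bimod => _ [_ [_ [_ [_ [_ [_ [_ [_ [+ _]]]]]]]]]. Qed.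
Let lact_ract a b x : ract (lact a x) b = lact a (ract x b).
Proof. by case: bimod => _ [_ [_ [_ [_ [_ [_ [_ [_ [_ [+ _]]]]]]]]]]. Qed.
Let lact_norm a x : `|lact a x| <= `|a| * `|x|.
Proof. by case: bimod => _ [_ [_ [_ [_ [_ [_ [_ [_ [_ [_ [+ _]]]]]]]]]]]. Qed.

Lemma ract0 a : ract 0 a = 0.
Proof. by have := ractZl 0 a 0; rewrite !scale0r. Qed.
Lemma lactBl a b x : lact (a - b) x = lact a x - lact b x.
Proof. by rewrite lactDl -scaleN1r lactZl scaleN1r. Qed.
Lemma lactBr a x y : lact a (x - y) = lact a x - lact a y.
Proof. by rewrite lactDr -scaleN1r lactZr scaleN1r. Qed.
Lemma ractBl a x y : ract (x - y) a = ract x a - ract y a.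
Proof. by rewrite ractDl -scaleN1r ractZl scaleN1r. Qed.

Section UnitalDerivation.
Variables (D : A -> E) (e : A).
Hypothesis D_der : derivation mul lact ract D.
Hypothesis e_unit : forall a, mul e a = a /\ mul a e = a.

Let DM a b : D (mul a b) = lact a (D b) + ract (D a) b.
Proof. by case: D_der => _ []. Qed.

(* [D e = e.D e + D e.e] forces [e.(D e.e) = 0], hence [(e.D e).a = 0]. *)
Lemma commutator_unit_correction a :
  lact a (lact e (D e) - D e) - ract (lact e (D e) - D e) a = ract (D e) a.
Proof.
have De_e : lact e (ract (D e) e) = 0.
  have /(congr1 (lact e)) : D e = lact e (D e) + ract (D e) e.
    by rewrite -{1}(proj1 (e_unit e)) DM.
  rewrite lactDr -lactM (proj1 (e_unit e)) -{1}[lact e (D e)]addr0.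
  by move/addrI.
have eDe_a : ract (lact e (D e)) a = 0.
  by rewrite -(proj1 (e_unit a)) ractM lact_ract De_e ract0.
by rewrite lactBr -lactM (proj2 (e_unit a)) subrr ractBl eDe_a !sub0r opprK.
Qed.

Lemma approx_inner_of_unit_net (I : Type) (le : I -> I -> Prop) (y : I -> A)
    (x : I -> E) :
  directed le -> netlim le y e ->
  (forall i a, lact a (x i) - ract (x i) a = lact (y i) (D a)) ->
  approx_inner lact ract D.
Proof.
move=> dir ye x_comm; pose w := lact e (D e) - D e.
exists I, le, (fun i => x i + w); split=> // a eps eps0.
have Da : D a = lact e (D a) + ract (D e) a by rewrite -{1}(proj1 (e_unit a)) DM.
have dist i : lact a (x i + w) - ract (x i + w) a - D a = lact (y i - e) (D a).
  rewrite lactDr ractDl opprD addrACA x_comm commutator_unit_correction {2}Da.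
  by rewrite opprD addrACA subrr addr0 lactBl.
have d0 : 0 < `|D a| + 1 by rewrite ltr_wpDl.
have [i0 i0P] := ye _ (divr_gt0 eps0 d0).
exists i0 => i i0i; rewrite dist; apply: le_lt_trans (lact_norm _ _) _.
apply: le_lt_trans (_ : eps / (`|D a| + 1) * `|D a| < eps).
  by apply: ler_wpM2r => //; exact/ltW/i0P.
by rewrite mulrAC ltr_pdivrMr // ltr_pM2l // ltrDl.
Qed.

End UnitalDerivation.

Section NormalDerivation.
Variables (P : set (A -> K)) (Q : set (E -> K)) (D : A -> E).
Hypothesis K_archi : Num.archimedean_axiom K.
Hypothesis dual_alg : dual_banach_algebra mul P.
Hypothesis normal : normal_dual_module P lact ract Q.
Hypothesis D_der : derivation mul lact ract D.
Hypothesis D_wcont : wcont P Q D.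

Let mulDl a b c : mul (a + b) c = mul a c + mul b c.
Proof. by case: dual_alg => [[+ _] _]. Qed.
Let mulDr a b c : mul a (b + c) = mul a b + mul a c.
Proof. by case: dual_alg => [[_ [+ _]] _]. Qed.
Let mulZl (k : K) a b : mul (k *: a) b = k *: mul a b.
Proof. by case: dual_alg => [[_ [_ [+ _]]] _]. Qed.
Let mulZr (k : K) a b : mul a (k *: b) = k *: mul a b.
Proof. by case: dual_alg => [[_ [_ [_ [+ _]]]] _]. Qed.
Let mul_norm a b : `|mul a b| <= `|a| * `|b|.
Proof. by case: dual_alg => [[_ [_ [_ [_ [_ +]]]]] _]. Qed.

Let DD a b : D (a + b) = D a + D b.
Proof. by case: D_der. Qed.
Let DZ (k : K) a : D (k *: a) = k *: D a.
Proof. by case: D_der => _ []. Qed.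
Let DM a b : D (mul a b) = lact a (D b) + ract (D a) b.
Proof. by case: D_der => _ []. Qed.

Let P_closed : closed_dual_subspace P.
Proof. by case: dual_alg => _ [[]]. Qed.
Let P_dual f : P f -> in_dual f.
Proof. by case: P_closed => + _; apply. Qed.
Let P_rep psi : in_dual_of P (@fbnd _ A) psi -> exists a, forall f, P f -> psi f = f a.
Proof. by case: dual_alg => _ [[_ [+ _]] _]; apply. Qed.
Let Q_closed : closed_dual_subspace Q.
Proof. by case: normal => [[]]. Qed.
Let Q_dual g : Q g -> in_dual g.
Proof. by case: Q_closed => + _; apply. Qed.
Let Q_rep psi : in_dual_of Q (@fbnd _ E) psi -> exists x, forall g, Q g -> psi g = g x.
Proof. by case: normal => [[_ [+ _]] _]; apply. Qed.
Let Q_sep x y : (forall g, Q g -> g x = g y) -> x = y.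
Proof. by case: normal => [[_ [_ [+ _]]] _]; apply. Qed.
Let Q_norming x (eps : K) :
  0 < eps -> exists g, [/\ Q g, fbnd g 1 & `|x| - eps <= `|g x|].
Proof.
by case: normal => [[_ [_ [_ +]]] _] => /(_ x eps) h /h [g [? [? ?]]]; exists g.
Qed.
Let Q_ract g a : Q g -> Q (fun x => g (ract x a)).
Proof. by case: normal => _ [+ _] => /(_ g a) h /h []. Qed.
Let Q_lact g a : Q g -> Q (fun x => g (lact a x)).
Proof. by case: normal => _ [+ _] => /(_ g a) h /h []. Qed.
Let lact_wcont x : wcont P Q (fun a => lact a x).
Proof. by case: normal => _ [_ +] => /(_ x) []. Qed.
Let ract_wcont x : wcont P Q (fun a => ract x a).
Proof. by case: normal => _ [_ +] => /(_ x) []. Qed.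

Lemma comp_derivation_mem g : Q g -> P (g \o D).
Proof.
move=> Qg; have [gD gZ] := proj1 (Q_dual Qg).
apply: wcont_comp_mem P_closed D_wcont Qg _.
by split=> [a b|k a] /=; rewrite ?DD ?gD ?DZ ?gZ.
Qed.

Lemma comp_lact_mem g x : Q g -> P (fun a => g (lact a x)).
Proof.
move=> Qg; have [gD gZ] := proj1 (Q_dual Qg).
apply: (wcont_comp_mem P_closed (lact_wcont x) Qg).
by split=> [a b|k a] /=; rewrite ?lactDl ?gD ?lactZl ?gZ.
Qed.

(* Uniform boundedness for [g \o D], [g] in the unit ball of [Q], which is
   pointwise bounded by [`|D a|]; then [Q] norms [E]. *)
Lemma derivation_bounded : exists MD, 0 <= MD /\ forall a, `|D a| <= MD * `|a|.
Proof.
pose F f := exists g, [/\ Q g, fbnd g 1 & f = g \o D].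
have [M FM] : exists M, forall f a, F f -> `|f a| <= M * `|a|.
  apply: uniform_boundedness K_archi _ _ => [f [g [Qg _ ->]]|a].
    exact/P_dual/comp_derivation_mem.
  by exists `|D a| => f [g [_ g1 ->]]; rewrite -[`|D a|]mul1r; apply: g1.
have Da a : `|D a| <= M * `|a|.
  apply/ler_addgt0Pr => eps eps0; have [g [Qg g1 gDa]] := Q_norming (D a) eps0.
  by rewrite -lerBlDr; apply: le_trans gDa (FM _ _ _); exists g.
exists `|M|; split=> // a; apply: le_trans (Da a) _.
have M0 : 0 <= M * `|a| := le_trans (normr_ge0 _) (Da a).
by rewrite -(ger0_norm M0) normrM normr_id.
Qed.

(* [deriv_form g] and [mul_form f] are [g] composed with the bounded bilinear
   maps [(b, c) |-> b.D c] and [(b, c) |-> b c], i.e. elements of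
   [(A \hat\otimes A)^*]; [mul_form] is [pi_A^*]. *)
Definition deriv_form (g : E -> K) : A -> A -> K := fun b c => g (lact b (D c)).
Definition mul_form (f : A -> K) : A -> A -> K := fun b c => f (mul b c).

Lemma deriv_form_bilbnd g M MD : 0 <= M -> fbnd g M -> 0 <= MD ->
  (forall c, `|D c| <= MD * `|c|) -> bilbnd (deriv_form g) (M * MD).
Proof.
move=> M0 gM MD0 DMD b c; apply: le_trans (gM _) _.
rewrite -!mulrA; apply: ler_wpM2l => //; apply: le_trans (lact_norm _ _) _.
by rewrite mulrCA; apply: ler_wpM2l => //; exact: DMD.
Qed.

Lemma mul_form_bilbnd f M : 0 <= M -> fbnd f M -> bilbnd (mul_form f) M.
Proof.
move=> M0 fM b c; apply: le_trans (fM _) _; rewrite -mulrA.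
apply: ler_wpM2l => //; exact: mul_norm.
Qed.

Lemma deriv_form_bbil g : Q g -> bbil (deriv_form g).
Proof.
move=> Qg; have [[gD gZ] _] := Q_dual Qg.
have [M [M0 gM]] := in_dual_bnd (Q_dual Qg).
have [MD [MD0 DMD]] := derivation_bounded.
split; first by move=> b b' c; rewrite /deriv_form lactDl gD.
split; first by move=> b c c'; rewrite /deriv_form DD lactDr gD.
split; first by move=> k b c; rewrite /deriv_form lactZl gZ.
split; first by move=> k b c; rewrite /deriv_form DZ lactZr gZ.
by exists (M * MD); apply: deriv_form_bilbnd.
Qed.

Lemma mul_form_bbil f : in_dual f -> bbil (mul_form f).
Proof.
move=> fdual; have [[fD fZ] _] := fdual; have [M [M0 fM]] := in_dual_bnd fdual.
split; first by move=> b b' c; rewrite /mul_form mulDl fD.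
split; first by move=> b c c'; rewrite /mul_form mulDr fD.
split; first by move=> k b c; rewrite /mul_form mulZl fZ.
split; first by move=> k b c; rewrite /mul_form mulZr fZ.
by exists M; apply: mul_form_bilbnd.
Qed.

Lemma deriv_form_rep q : bidual q -> exists x, forall g, Q g -> q (deriv_form g) = g x.
Proof.
move=> [qD [qZ [C qC]]]; apply: Q_rep.
have [MD [MD0 DMD]] := derivation_bounded.
split; first by move=> g g' Qg Qg'; apply: qD; apply: deriv_form_bbil.
split; first by move=> k g Qg; apply: qZ; apply: deriv_form_bbil.
exists (C * MD) => g M Qg M0 gM; rewrite mulrAC -mulrA.
by apply: qC; [exact: deriv_form_bbil|exact: mulr_ge0|exact: deriv_form_bilbnd].
Qed.

Lemma mul_form_rep q : bidual q -> exists a, forall f, P f -> q (mul_form f) = f a.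
Proof.
move=> [qD [qZ [C qC]]]; apply: P_rep.
split; first by move=> f f' Pf Pf'; apply: qD; apply/mul_form_bbil/P_dual.
split; first by move=> k f Pf; apply: qZ; apply/mul_form_bbil/P_dual.
exists C => f M Pf M0 fM.
by apply: qC; [exact/mul_form_bbil/P_dual|exact: M0|exact: mul_form_bilbnd].
Qed.

(* [D (c a) = c.D a + D c.a] splits [a.T_g] into a [mul_form] and a
   [deriv_form]. *)
Lemma lactT_deriv_form g a : Q g -> lactT mul a (deriv_form g) =
  (fun b c => deriv_form (fun x => g (ract x a)) b c
              + mul_form (fun b => g (lact b (D a))) b c).
Proof.
move=> Qg; have [[gD _] _] := Q_dual Qg.
apply: boolp.funext => b; apply: boolp.funext => c.
by rewrite /lactT /deriv_form /mul_form DM lactDr lactM lact_ract gD addrC.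
Qed.

Lemma ractT_deriv_form g a :
  ractT mul (deriv_form g) a = deriv_form (fun x => g (lact a x)).
Proof.
by apply: boolp.funext => b; apply: boolp.funext => c; rewrite /ractT /deriv_form lactM.
Qed.

Lemma sigma_wc_deriv_form g : Q g -> sigma_wc mul P (deriv_form g).
Proof.
move=> Qg; split; first exact: deriv_form_bbil.
split=> I le u a0 dir ua q qbid; have [z z_rep] := deriv_form_rep qbid.
  have [b b_rep] := mul_form_rep qbid.
  have qa a : q (lactT mul a (deriv_form g)) = g (ract z a) + g (lact b (D a)).
    rewrite (lactT_deriv_form a Qg) (proj1 qbid).
    - by rewrite (z_rep _ (Q_ract a Qg)) (b_rep _ (comp_lact_mem (D a) Qg)).
    - exact/deriv_form_bbil/Q_ract.
    - exact/mul_form_bbil/P_dual/comp_lact_mem.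
  under eq_fun do rewrite qa; rewrite qa.
  apply: netlimK_add => //; first exact: ract_wcont z _ le u _ dir ua g Qg.
  exact: D_wcont _ le u _ dir ua _ (Q_lact b Qg).
have qa a : q (ractT mul (deriv_form g) a) = g (lact a z).
  by rewrite ractT_deriv_form (z_rep _ (Q_lact a Qg)).
under eq_fun do rewrite qa; rewrite qa.
exact: lact_wcont z _ le u _ dir ua g Qg.
Qed.

Lemma virtual_diagonal_commutator (m : (A -> A -> K) -> K) (y : A) (x : E) :
  bidual m -> (forall a T, sigma_wc mul P T -> m (ractT mul T a) = m (lactT mul a T)) ->
  (forall f, P f -> f y = m (mul_form f)) -> (forall g, Q g -> m (deriv_form g) = g x) ->
  forall a, lact a x - ract x a = lact y (D a).
Proof.
move=> mbid msym y_rep x_rep a; apply: Q_sep => g Qg.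
have gxa : g (lact a x) = m (deriv_form (fun z => g (lact a z))).
  exact: esym (x_rep _ (Q_lact a Qg)).
have gax : g (ract x a) = m (deriv_form (fun z => g (ract z a))).
  exact: esym (x_rep _ (Q_ract a Qg)).
have gyDa : g (lact y (D a)) = m (mul_form (fun b => g (lact b (D a)))).
  exact: y_rep _ (comp_lact_mem _ Qg).
rewrite (lin_funB _ _ (proj1 (Q_dual Qg))) gxa gax gyDa -ractT_deriv_form.
rewrite (msym a _ (sigma_wc_deriv_form Qg)) (lactT_deriv_form a Qg) (proj1 mbid).
- by rewrite addrC addKr.
- exact/deriv_form_bbil/Q_ract.
- exact/mul_form_bbil/P_dual/comp_lact_mem.
Qed.

End NormalDerivation.

End Bimodule.

Local Open Scope complex_scope.

Lemma complex_archimedean (R : realType) : Num.archimedean_axiom R[i].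
Proof.
move=> x; set c := `|x|; have c0 : 0 <= c := normr_ge0 x.
have cRe : c = (complex.Re c)%:C := esym (RRe_real (ger0_real c0)).
exists (Num.bound (complex.Re c)).
rewrite cRe -(rmorph_nat (real_complex R)) ltcR archi_boundP //.
by rewrite -lecR -cRe.
Qed.

Theorem lemma2p5 (R : realType) (A : completeNormedModType R[i])
  (mul : A -> A -> A) (P : set (A -> R[i])) :
  dual_banach_algebra mul P -> unital mul ->
  johnson_pseudo_connes_amenable mul P ->
  approx_connes_amenable mul P.
Proof.
move=> dual_alg [e e_unit] [I [le [m [dir [m_bidual [m_sym [y [y_rep y_unit]]]]]]]].
move=> E lact ract Q bimod normal D D_der D_wcont.
have [x x_rep] := boolp.choice (fun i => deriv_form_rep bimod
  (@complex_archimedean R) dual_alg normal D_der D_wcont (m_bidual i)).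
have y_e : netlim le y e.
  move=> eps eps0; have [i0 i0P] := y_unit e eps eps0.
  by exists i0 => i /i0P; rewrite (proj2 (e_unit _)).
have x_comm i : forall a, lact a (x i) - ract (x i) a = lact (y i) (D a).
  exact (virtual_diagonal_commutator bimod (@complex_archimedean R) dual_alg normal
    D_der D_wcont (m_bidual i) (m_sym i) (y_rep i) (x_rep i)).
exact (approx_inner_of_unit_net bimod D_der e_unit dir y_e x_comm).
Qed.
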